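(* In the setting of the context, let $\phi:F(G)\to\coprod_A G_\lambda$ be the unique homomorphism with $\phi(g)=g$ for all $g\in G$ (it is surjective and $1$-Lipschitz from $(F(G),d_F)$ to $(\coprod_A G_\lambda,\underline d)$), let $\mathfrak N=\ker\phi$, and let $d_0$ be the factor metric on $F(G)/\mathfrak N$. Then the isomorphism $F(G)/\mathfrak N\to\coprod_A G_\lambda$ induced by $\phi$ is an isometry from $(F(G)/\mathfrak N,d_0)$ onto $(\coprod_A G_\lambda,\underline d)$.
   Context: Setting: $(G_\lambda,d_\lambda)_{\lambda\in\Lambda}$ are groups with two-sided invariant metrics, $A$ is a common subgroup closed in every $G_\lambda$, $G_{\lambda_1}\cap G_{\lambda_2}=A$ for $\lambda_1\ne\lambda_2$, all $d_\lambda$ agree on $A$; $G=\bigcup_\lambda G_\lambda$ with the amalgam metric $d$ ($d=d_\lambda$ on $G_\lambda$; $d(f_1,f_2)=\inf_{a\in A}\{d_{\lambda_1}(f_1,a)+d_{\lambda_2}(a,f_2)\}$ if $f_1\in G_{\lambda_1}$, $f_2\in G_{\lambda_2}$ are not in a common $G_\lambda$), and $\underline d$ is the Graev metric on $\coprod_A G_\lambda$: $\underline d(f_1,f_2)=\inf\{\sum_i d(\alpha_1(i),\alpha_2(i)) : |\alpha_1|=|\alpha_2|,\ \hat\alpha_i=f_i\}$ over words in the alphabet $G$, $\hat\alpha$ being the product of the letters. Graev metric on free groups: for a pointed metric space $(X,e,d)$, let $X^{-1}$ be a set of formal inverses with $e^{-1}=e$, $X\cap X^{-1}=\{e\}$,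 and $\overline X=X\cup X^{-1}$ with metric $d(x^{-1},y^{-1})=d(x,y)$, $d(x,y^{-1})=d(x,e)+d(e,y)$ for $x,y\in X$. $F(X)$ is the free group on $X\setminus\{e\}$ (with $e$ interpreted as the identity); for a word $u$ over $\overline X$, $\hat u\in F(X)$ is its evaluation. For words $u,v$ of equal length $\rho(u,v)=\sum_i d(u(i),v(i))$, and $d_F(f,g)=\inf\{\rho(u,v):|u|=|v|,\hat u=f,\hat v=g\}$; this is a two-sided invariant metric on $F(X)$. Here $X=G$ pointed at the identity $e$ with the amalgam metric $d$. Factor metric: for a group $H$ with two-sided invariant metric $\delta$ and closed normal subgroup $N$, $d_0(g_1N,g_2N)=\inf\{\delta(g_1h_1,g_2h_2):h_1,h_2\in N\}$. *)

From Stdlib Require Import Reals List Relations ClassicalEpsilon.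
Open Scope R_scope.

Definition is_glb (S : R -> Prop) (m : R) : Prop :=
  (forall x, S x -> m <= x) /\ (forall m', (forall x, S x -> m' <= x) -> m' <= m).

Definition Rinf (S : R -> Prop) : R :=
  epsilon (inhabits 0%R) (fun m => is_glb S m).

(** The carrier [T] plays the role of G = ⋃ G_λ;
    [In l] is the subset G_λ, [A] the common subgroup, [dl l] the metric d_λ.
    [mul]/[inv]/[e] are the group operations of the G_λ (they agree on
    intersections, which are all A); [mul x y] for x,y not in a common G_λ
    is meaningless and never used. *)
Record amalgam_data := {
  T : Type;
  Lam : Type;
  e : T;
  mul : T -> T -> T;
  inv : T -> T;
  In : Lam -> T -> Prop;
  A : T -> Prop;
  dl : Lam -> T -> T -> R
}.

Definition amalgam_setting (D : amalgam_data) : Prop :=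
  let e := e D in let mul := mul D in let inv := inv D in
  let In := In D in let A := A D in let dl := dl D in
  (forall x, exists l, In l x) /\
  (forall l, In l e) /\
  (forall l x y, In l x -> In l y -> In l (mul x y)) /\
  (forall l x, In l x -> In l (inv x)) /\
  (forall l x y z, In l x -> In l y -> In l z -> mul (mul x y) z = mul x (mul y z)) /\
  (forall l x, In l x -> mul e x = x /\ mul x e = x) /\
  (forall l x, In l x -> mul x (inv x) = e /\ mul (inv x) x = e) /\
  A e /\
  (forall x y, A x -> A y -> A (mul x y)) /\
  (forall x, A x -> A (inv x)) /\
  (forall l x, A x -> In l x) /\
  (forall l1 l2 x, l1 <> l2 -> In l1 x -> In l2 x -> A x) /\
  (forall l x y, In l x -> In l y -> 0 <= dl l x y) /\
  (forall l x y, In l x -> In l y -> (dl l x y = 0 <-> x = y)) /\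
  (forall l x y, In l x -> In l y -> dl l x y = dl l y x) /\
  (forall l x y z, In l x -> In l y -> In l z -> dl l x z <= dl l x y + dl l y z) /\
  (forall l x y z, In l x -> In l y -> In l z ->
     dl l (mul z x) (mul z y) = dl l x y /\ dl l (mul x z) (mul y z) = dl l x y) /\
  (forall l x, In l x -> (forall eps, 0 < eps -> exists a, A a /\ dl l x a < eps) -> A x) /\
  (forall l1 l2 a b, A a -> A b -> dl l1 a b = dl l2 a b).

Definition amalg_dist (D : amalgam_data) (x y : T D) : R :=
  Rinf (fun r =>
    (exists l, In D l x /\ In D l y /\ r = dl D l x y) \/
    ((~ exists l, In D l x /\ In D l y) /\
      exists l1 l2 a, In D l1 x /\ In D l2 y /\ A D a /\
        r = dl D l1 x a + dl D l2 a y)).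

Fixpoint rho {L : Type} (dd : L -> L -> R) (u v : list L) : R :=
  match u, v with
  | a :: u', b :: v' => dd a b + rho dd u' v'
  | _, _ => 0
  end.

(** Letters of X̄ = X ∪ X^{-1}: (x,false) is x, (x,true) is the formal x^{-1};
    (e,true) and (e,false) both denote e (consistent with the metric below). *)
Definition letter_dist {X : Type} (d : X -> X -> R) (e0 : X) (p q : X * bool) : R :=
  match p, q with
  | (x, false), (y, false) => d x y
  | (x, true), (y, true) => d x y
  | (x, _), (y, _) => d x e0 + d e0 y
  end.

(** Free group F(X) on X \ {e}: words over X̄ modulo free reduction
    (with e read as the identity). *)
Inductive free_step {X : Type} (e0 : X) : list (X * bool) -> list (X * bool) -> Prop :=
| fs_cancel u v x b : free_step e0 (u ++ (x, b) :: (x, negb b) :: v) (u ++ v)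
| fs_unit u v b : free_step e0 (u ++ (e0, b) :: v) (u ++ v).

Definition free_eq {X : Type} (e0 : X) : relation (list (X * bool)) :=
  clos_refl_sym_trans _ (free_step e0).

Inductive amal_step (D : amalgam_data) : list (T D) -> list (T D) -> Prop :=
| as_mul (u v : list (T D)) l a b : In D l a -> In D l b ->
    amal_step D (u ++ a :: b :: v) (u ++ mul D a b :: v)
| as_unit (u v : list (T D)) : amal_step D (u ++ e D :: v) (u ++ v).

Definition amal_eq (D : amalgam_data) : relation (list (T D)) :=
  clos_refl_sym_trans _ (amal_step D).

Definition phiw (D : amalgam_data) (w : list (T D * bool)) : list (T D) :=
  map (fun p : T D * bool => if snd p then inv D (fst p) else fst p) w.

(** Graev metric d_F on F(G) (X = G pointed at e with amalgam metric d),
    evaluated on classes of representing words u0, v0. *)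
Definition dF (D : amalgam_data) (u0 v0 : list (T D * bool)) : R :=
  Rinf (fun r => exists u v, length u = length v /\
    free_eq (e D) u u0 /\ free_eq (e D) v v0 /\
    r = rho (letter_dist (amalg_dist D) (e D)) u v).

Definition dunder (D : amalgam_data) (a0 b0 : list (T D)) : R :=
  Rinf (fun r => exists a b, length a = length b /\
    amal_eq D a a0 /\ amal_eq D b b0 /\ r = rho (amalg_dist D) a b).

Definition inN (D : amalgam_data) (h : list (T D * bool)) : Prop :=
  amal_eq D (phiw D h) nil.

Definition d0 (D : amalgam_data) (w1 w2 : list (T D * bool)) : R :=
  Rinf (fun r => exists h1 h2, inN D h1 /\ inN D h2 /\
    r = dF D (w1 ++ h1) (w2 ++ h2)).

From Pilot Require Import Defs.
From Stdlib Require Import Reals List Relations.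
From Stdlib Require Import Lra Lia Classical ClassicalEpsilon.

Open Scope R_scope.

(* Writing ι for the embedding of a word
   over G as a word of positive letters, the proof has three ingredients.
   - Surjectivity: φ(ι a) = a.
   - d_0 ≤ d̲: given words a ~ φ w1, b ~ φ w2 of equal length, the elements
     h_1 = w_1^{-1} ι a and h_2 = w_2^{-1} ι b lie in N and w_1 h_1 ~ ι a, w_2 h_2 ~ ι b, so
     d_0 ≤ d_F(ι a, ι b) ≤ ρ(ι a, ι b) = ρ(a, b).
   - d̲ ≤ d_0: φ is 1-Lipschitz for (d_F, d̲), because every pair of letters
     (p, q) lifts to words of equal length representing φ p, φ q at distance
     at most d(p, q) (inverse letters use that inversion is 1-Lipschitz for
     the amalgam metric; mixed letters are padded with e); and d̲ only depends
     on classes, so d̲(φ w1, φ w2) = d̲(φ(w1 h1), φ(w2 h2)) ≤ d_F(w1 h1, w2 h2). *)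

Lemma glb_exists (S : R -> Prop) :
  (exists x, S x) -> (exists b, forall x, S x -> b <= x) -> exists m, is_glb S m.
Proof.
  intros [x0 Hx0] [b Hb].
  destruct (completeness (fun y => S (- y))) as [m [Hup Hleast]].
  - exists (- b). intros y Hy. specialize (Hb _ Hy). lra.
  - exists (- x0). rewrite Ropp_involutive. exact Hx0.
  - exists (- m). split.
    + intros x Hx. assert (H := Hup (- x)). cbv beta in H.
      rewrite Ropp_involutive in H. specialize (H Hx). lra.
    + intros m' Hm'.
      assert (m <= - m') by (apply Hleast; intros y Hy; specialize (Hm' _ Hy); lra).
      lra.
Qed.

Lemma Rinf_spec (S : R -> Prop) :
  (exists x, S x) -> (exists b, forall x, S x -> b <= x) -> is_glb S (Rinf S).
Proof. intros Hne Hbd. unfold Rinf. apply epsilon_spec. apply glb_exists; assumption. Qed.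

Lemma Rinf_le (S : R -> Prop) (b x : R) :
  (forall y, S y -> b <= y) -> S x -> Rinf S <= x.
Proof. intros Hb Hx. apply (Rinf_spec S); eauto. Qed.

Lemma Rinf_ge (S : R -> Prop) (m : R) :
  (exists x, S x) -> (forall y, S y -> m <= y) -> m <= Rinf S.
Proof. intros Hne Hm. apply (Rinf_spec S Hne (ex_intro _ m Hm)). exact Hm. Qed.

Lemma Rinf_mono (S S' : R -> Prop) (b : R) :
  (forall y, S y -> b <= y) -> (exists x, S' x) ->
  (forall x, S' x -> S x) -> Rinf S <= Rinf S'.
Proof.
  intros Hb Hne Hsub. apply Rinf_ge; [exact Hne|].
  intros y Hy. apply Rinf_le with b; auto.
Qed.

Lemma rho_nonneg {L : Type} (dd : L -> L -> R) (u v : list L) :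
  (forall a b, 0 <= dd a b) -> 0 <= rho dd u v.
Proof.
  intro Hdd. revert v; induction u as [|a u IH]; intros [|b v]; simpl; try lra.
  specialize (IH v). specialize (Hdd a b). lra.
Qed.

Lemma rho_app {L : Type} (dd : L -> L -> R) (a b u v : list L) :
  length a = length b -> rho dd (a ++ u) (b ++ v) = rho dd a b + rho dd u v.
Proof.
  revert b; induction a as [|x a IH]; intros [|y b] Hlen; simpl in *;
    try discriminate; try lra.
  injection Hlen as Hlen. rewrite IH by exact Hlen. lra.
Qed.

Lemma letter_dist_nonneg {X : Type} (d : X -> X -> R) (e0 : X) (p q : X * bool) :
  (forall x y, 0 <= d x y) -> 0 <= letter_dist d e0 p q.
Proof.
  intro Hd. destruct p as [x []], q as [y []]; simpl;
    try apply Rplus_le_le_0_compat; apply Hd.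
Qed.

Section FreeWords.
Context {X : Type} (e0 : X).

Definition flip (p : X * bool) : X * bool := (fst p, negb (snd p)).
Definition winv (w : list (X * bool)) : list (X * bool) := rev (map flip w).

Lemma free_ctx (c c' u v : list (X * bool)) :
  free_eq e0 u v -> free_eq e0 (c ++ u ++ c') (c ++ v ++ c').
Proof.
  induction 1 as [u v Hstep| | |]; [|apply rst_refl|apply rst_sym; auto|eapply rst_trans; eauto].
  apply rst_step. destruct Hstep as [u v x b|u v b].
  - replace (c ++ (u ++ (x, b) :: (x, negb b) :: v) ++ c')
      with ((c ++ u) ++ (x, b) :: (x, negb b) :: (v ++ c'))
      by (rewrite <- !app_assoc; reflexivity).
    replace (c ++ (u ++ v) ++ c') with ((c ++ u) ++ (v ++ c'))
      by (rewrite <- !app_assoc; reflexivity).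
    constructor.
  - replace (c ++ (u ++ (e0, b) :: v) ++ c') with ((c ++ u) ++ (e0, b) :: (v ++ c'))
      by (rewrite <- !app_assoc; reflexivity).
    replace (c ++ (u ++ v) ++ c') with ((c ++ u) ++ (v ++ c'))
      by (rewrite <- !app_assoc; reflexivity).
    constructor.
Qed.

Lemma free_pad (u : list (X * bool)) (k : nat) : free_eq e0 (u ++ repeat (e0, false) k) u.
Proof.
  induction k as [|k IH]; simpl.
  - rewrite app_nil_r. apply rst_refl.
  - eapply rst_trans; [|exact IH]. apply rst_step. apply (fs_unit e0 u _ false).
Qed.

Lemma free_winv_r (w : list (X * bool)) : free_eq e0 (w ++ winv w) nil.
Proof.
  induction w as [|p w IH]; [apply rst_refl|].
  unfold winv in *. simpl.
  pose proof (free_ctx (p :: nil) (flip p :: nil) _ _ IH) as K. simpl in K.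
  rewrite app_assoc. simpl. eapply rst_trans; [exact K|].
  destruct p as [x b]. apply rst_step. apply (fs_cancel e0 nil nil x b).
Qed.

Lemma free_winv_l (w : list (X * bool)) : free_eq e0 (winv w ++ w) nil.
Proof.
  induction w as [|p w IH]; [apply rst_refl|].
  unfold winv in *. simpl. rewrite <- app_assoc. simpl.
  eapply rst_trans; [|exact IH]. apply rst_step.
  destruct p as [x b]. simpl.
  pose proof (fs_cancel e0 (rev (map flip w)) w x (negb b)) as K.
  rewrite Bool.negb_involutive in K. exact K.
Qed.

Lemma free_cancel_prefix (w z : list (X * bool)) : free_eq e0 (w ++ winv w ++ z) z.
Proof.
  pose proof (free_ctx nil z _ _ (free_winv_r w)) as K. simpl in K.
  rewrite app_assoc. exact K.
Qed.

End FreeWords.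

Section Amalgam.
Variable D : amalgam_data.
Hypothesis HD : amalgam_setting D.

Ltac from_setting :=
  unfold amalgam_setting in HD; cbv zeta in HD; decompose [and] HD; assumption.

Let in_union : forall x, exists l, Defs.In D l x.
Proof. from_setting. Qed.
Let in_mul : forall l x y, Defs.In D l x -> Defs.In D l y -> Defs.In D l (mul D x y).
Proof. from_setting. Qed.
Let in_inv : forall l x, Defs.In D l x -> Defs.In D l (inv D x).
Proof. from_setting. Qed.
Let mul_assoc : forall l x y z, Defs.In D l x -> Defs.In D l y -> Defs.In D l z ->
  mul D (mul D x y) z = mul D x (mul D y z).
Proof. from_setting. Qed.
Let mul_unit : forall l x, Defs.In D l x ->
  mul D (Defs.e D) x = x /\ mul D x (Defs.e D) = x.
Proof. from_setting. Qed.
Let mul_inv : forall l x, Defs.In D l x ->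
  mul D x (inv D x) = Defs.e D /\ mul D (inv D x) x = Defs.e D.
Proof. from_setting. Qed.
Let A_unit : A D (Defs.e D).
Proof. from_setting. Qed.
Let A_inv : forall x, A D x -> A D (inv D x).
Proof. from_setting. Qed.
Let A_in : forall l x, A D x -> Defs.In D l x.
Proof. from_setting. Qed.
Let dl_nonneg : forall l x y, Defs.In D l x -> Defs.In D l y -> 0 <= dl D l x y.
Proof. from_setting. Qed.
Let dl_sym : forall l x y, Defs.In D l x -> Defs.In D l y -> dl D l x y = dl D l y x.
Proof. from_setting. Qed.
Let dl_invariant : forall l x y z, Defs.In D l x -> Defs.In D l y -> Defs.In D l z ->
  dl D l (mul D z x) (mul D z y) = dl D l x y /\ dl D l (mul D x z) (mul D y z) = dl D l x y.
Proof. from_setting. Qed.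

Lemma inv_unit : inv D (Defs.e D) = Defs.e D.
Proof.
  destruct (in_union (Defs.e D)) as [l Hl].
  pose proof (proj1 (mul_inv l _ Hl)) as H.
  rewrite (proj1 (mul_unit l _ (in_inv l _ Hl))) in H. exact H.
Qed.

Lemma inv_involutive l x : Defs.In D l x -> inv D (inv D x) = x.
Proof.
  intro Hx. pose proof (in_inv l _ Hx) as Hix. pose proof (in_inv l _ Hix) as Hiix.
  rewrite <- (proj2 (mul_unit l _ Hx)) at 2.
  rewrite <- (proj1 (mul_inv l _ Hix)), <- (mul_assoc l) by auto.
  rewrite (proj1 (mul_inv l _ Hx)), (proj1 (mul_unit l _ Hiix)). reflexivity.
Qed.

Lemma dl_inv l x y : Defs.In D l x -> Defs.In D l y ->
  dl D l (inv D x) (inv D y) = dl D l x y.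
Proof.
  intros Hx Hy. pose proof (in_inv l _ Hx) as Hix. pose proof (in_inv l _ Hy) as Hiy.
  (* d(x^{-1}, y^{-1}) = d(e, x y^{-1}) = d(y, x) by left, then right, translation *)
  assert (Eleft : dl D l (mul D x (inv D x)) (mul D x (inv D y)) = dl D l (inv D x) (inv D y))
    by (apply dl_invariant; auto).
  assert (Eright : dl D l (mul D (Defs.e D) y) (mul D (mul D x (inv D y)) y)
                   = dl D l (Defs.e D) (mul D x (inv D y)))
    by (apply dl_invariant; auto).
  rewrite (proj1 (mul_inv l _ Hx)) in Eleft.
  rewrite (proj1 (mul_unit l _ Hy)), (mul_assoc l), (proj2 (mul_inv l _ Hy)),
    (proj2 (mul_unit l _ Hx)) in Eright by auto.
  rewrite <- Eleft, <- Eright. apply dl_sym; auto.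
Qed.

Definition amalg_candidates (x y : T D) : R -> Prop := fun r =>
  (exists l, Defs.In D l x /\ Defs.In D l y /\ r = dl D l x y) \/
  ((~ exists l, Defs.In D l x /\ Defs.In D l y) /\
    exists l1 l2 a, Defs.In D l1 x /\ Defs.In D l2 y /\ A D a /\
      r = dl D l1 x a + dl D l2 a y).

Lemma amalg_candidates_nonneg x y r : amalg_candidates x y r -> 0 <= r.
Proof.
  intros [[l (Hx & Hy & ->)] | [_ (l1 & l2 & a & Hx & Hy & Ha & ->)]].
  - apply dl_nonneg; auto.
  - apply Rplus_le_le_0_compat; apply dl_nonneg; auto.
Qed.

Lemma amalg_candidates_nonempty x y : exists r, amalg_candidates x y r.
Proof.
  destruct (classic (exists l, Defs.In D l x /\ Defs.In D l y)) as [[l [Hx Hy]] | Hnone].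
  - exists (dl D l x y). left. eauto.
  - destruct (in_union x) as [l1 Hx]. destruct (in_union y) as [l2 Hy].
    eexists. right. split; [exact Hnone|]. exists l1, l2, (Defs.e D). eauto.
Qed.

Lemma amalg_dist_nonneg x y : 0 <= amalg_dist D x y.
Proof.
  apply Rinf_ge; [apply amalg_candidates_nonempty|]. apply amalg_candidates_nonneg.
Qed.

(* Inversion is 1-Lipschitz for the amalgam metric: it maps candidates to candidates. *)
Lemma amalg_dist_inv x y : amalg_dist D (inv D x) (inv D y) <= amalg_dist D x y.
Proof.
  apply Rinf_ge; [apply amalg_candidates_nonempty|].
  intros r Hr. apply Rinf_le with 0; [apply amalg_candidates_nonneg|].
  destruct Hr as [[l (Hx & Hy & ->)] | [Hnone (l1 & l2 & a & Hx & Hy & Ha & ->)]].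
  - left. exists l. repeat split; auto. rewrite dl_inv; auto.
  - right. split.
    + intros [l [Hix Hiy]]. apply Hnone. exists l.
      rewrite <- (inv_involutive l1 x Hx), <- (inv_involutive l2 y Hy). auto.
    + exists l1, l2, (inv D a). repeat split; auto.
      rewrite (dl_inv l1 x a), (dl_inv l2 a y); auto.
Qed.

Lemma amalg_dist_inv_e_l x : amalg_dist D (inv D x) (Defs.e D) <= amalg_dist D x (Defs.e D).
Proof. rewrite <- inv_unit at 1. apply amalg_dist_inv. Qed.

Lemma amalg_dist_inv_e_r y : amalg_dist D (Defs.e D) (inv D y) <= amalg_dist D (Defs.e D) y.
Proof. rewrite <- inv_unit at 1. apply amalg_dist_inv. Qed.

Lemma amal_ctx (c c' u v : list (T D)) :
  amal_eq D u v -> amal_eq D (c ++ u ++ c') (c ++ v ++ c').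
Proof.
  induction 1 as [u v Hstep| | |]; [|apply rst_refl|apply rst_sym; auto|eapply rst_trans; eauto].
  apply rst_step. destruct Hstep as [u v l a b Ha Hb|u v].
  - replace (c ++ (u ++ a :: b :: v) ++ c') with ((c ++ u) ++ a :: b :: (v ++ c'))
      by (rewrite <- !app_assoc; reflexivity).
    replace (c ++ (u ++ mul D a b :: v) ++ c') with ((c ++ u) ++ mul D a b :: (v ++ c'))
      by (rewrite <- !app_assoc; reflexivity).
    econstructor; eauto.
  - replace (c ++ (u ++ Defs.e D :: v) ++ c') with ((c ++ u) ++ Defs.e D :: (v ++ c'))
      by (rewrite <- !app_assoc; reflexivity).
    replace (c ++ (u ++ v) ++ c') with ((c ++ u) ++ (v ++ c'))
      by (rewrite <- !app_assoc; reflexivity).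
    constructor.
Qed.

Lemma amal_app (a a' u u' : list (T D)) :
  amal_eq D a a' -> amal_eq D u u' -> amal_eq D (a ++ u) (a' ++ u').
Proof.
  intros Ha Hu. eapply rst_trans.
  - exact (amal_ctx nil u _ _ Ha).
  - pose proof (amal_ctx a' nil _ _ Hu) as K. rewrite !app_nil_r in K. exact K.
Qed.

Lemma amal_pad (u : list (T D)) (k : nat) : amal_eq D (u ++ repeat (Defs.e D) k) u.
Proof.
  induction k as [|k IH]; simpl.
  - rewrite app_nil_r. apply rst_refl.
  - eapply rst_trans; [|exact IH]. apply rst_step. apply (as_unit D u).
Qed.

Lemma phiw_app (u v : list (T D * bool)) : phiw D (u ++ v) = phiw D u ++ phiw D v.
Proof. apply map_app. Qed.

Definition positive_word (a : list (T D)) : list (T D * bool) :=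
  map (fun x => (x, false)) a.

Lemma phiw_positive_word a : phiw D (positive_word a) = a.
Proof. induction a as [|x a IH]; simpl; f_equal; auto. Qed.

Lemma rho_positive_word a b :
  rho (letter_dist (amalg_dist D) (Defs.e D)) (positive_word a) (positive_word b)
  = rho (amalg_dist D) a b.
Proof. revert b; induction a as [|x a IH]; intros [|y b]; simpl; try rewrite IH; reflexivity. Qed.

Lemma phi_free (u v : list (T D * bool)) :
  free_eq (Defs.e D) u v -> amal_eq D (phiw D u) (phiw D v).
Proof.
  induction 1 as [u v Hstep| | |]; [|apply rst_refl|apply rst_sym; auto|eapply rst_trans; eauto].
  destruct Hstep as [u v x b|u v b]; rewrite !phiw_app; simpl.
  - destruct (in_union x) as [l Hl].
    assert (Hcancel : mul D (if b then inv D x else x) (if negb b then inv D x else x)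
                      = Defs.e D) by (destruct b; apply (mul_inv l x Hl)).
    eapply rst_trans.
    + apply rst_step. apply (as_mul D (phiw D u) (phiw D v) l); destruct b; simpl; auto.
    + rewrite Hcancel. apply rst_step. apply as_unit.
  - replace (if b then inv D (Defs.e D) else Defs.e D) with (Defs.e D)
      by (destruct b; [rewrite inv_unit|]; reflexivity).
    apply rst_step. apply as_unit.
Qed.

Lemma phi_kernel (w h : list (T D * bool)) :
  inN D h -> amal_eq D (phiw D (w ++ h)) (phiw D w).
Proof.
  intro Hh. rewrite phiw_app.
  pose proof (amal_ctx (phiw D w) nil _ _ Hh) as K. rewrite !app_nil_r in K. exact K.
Qed.

Lemma correction_in_kernel (w : list (T D * bool)) (a : list (T D)) :
  amal_eq D a (phiw D w) -> inN D (winv w ++ positive_word a).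
Proof.
  intro Ha. unfold inN. rewrite phiw_app, phiw_positive_word.
  eapply rst_trans.
  - pose proof (amal_ctx (phiw D (winv w)) nil _ _ Ha) as K. rewrite !app_nil_r in K. exact K.
  - rewrite <- phiw_app. apply (phi_free _ nil). apply free_winv_l.
Qed.

Lemma dF_candidates_nonempty (u0 v0 : list (T D * bool)) :
  exists r, exists u v, length u = length v /\
    free_eq (Defs.e D) u u0 /\ free_eq (Defs.e D) v v0 /\
    r = rho (letter_dist (amalg_dist D) (Defs.e D)) u v.
Proof.
  eexists. exists (u0 ++ repeat (Defs.e D, false) (length v0)),
                  (v0 ++ repeat (Defs.e D, false) (length u0)).
  split; [rewrite !length_app, !repeat_length; lia|].
  split; [apply free_pad|]. split; [apply free_pad|]. reflexivity.
Qed.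

Lemma dunder_candidates_nonempty (a0 b0 : list (T D)) :
  exists r, exists a b, length a = length b /\
    amal_eq D a a0 /\ amal_eq D b b0 /\ r = rho (amalg_dist D) a b.
Proof.
  eexists. exists (a0 ++ repeat (Defs.e D) (length b0)), (b0 ++ repeat (Defs.e D) (length a0)).
  split; [rewrite !length_app, !repeat_length; lia|].
  split; [apply amal_pad|]. split; [apply amal_pad|]. reflexivity.
Qed.

Lemma letter_rho_nonneg (u v : list (T D * bool)) :
  0 <= rho (letter_dist (amalg_dist D) (Defs.e D)) u v.
Proof. apply rho_nonneg. intros. apply letter_dist_nonneg, amalg_dist_nonneg. Qed.

Lemma dF_nonneg (u0 v0 : list (T D * bool)) : 0 <= dF D u0 v0.
Proof.
  apply Rinf_ge; [apply dF_candidates_nonempty|].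
  intros r (u & v & _ & _ & _ & ->). apply letter_rho_nonneg.
Qed.

Lemma dF_le_rho (u0 v0 u v : list (T D * bool)) :
  length u = length v -> free_eq (Defs.e D) u u0 -> free_eq (Defs.e D) v v0 ->
  dF D u0 v0 <= rho (letter_dist (amalg_dist D) (Defs.e D)) u v.
Proof.
  intros Hlen Hu Hv. apply Rinf_le with 0.
  - intros r (u' & v' & _ & _ & _ & ->). apply letter_rho_nonneg.
  - exists u, v. auto.
Qed.

Lemma dunder_compat (a0 b0 a1 b1 : list (T D)) :
  amal_eq D a1 a0 -> amal_eq D b1 b0 -> dunder D a0 b0 <= dunder D a1 b1.
Proof.
  intros Ha Hb. apply Rinf_mono with 0.
  - intros r (a & b & _ & _ & _ & ->). apply rho_nonneg, amalg_dist_nonneg.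
  - apply dunder_candidates_nonempty.
  - intros r (a & b & Hlen & Ha' & Hb' & ->). exists a, b.
    repeat split; auto; eapply rst_trans; eauto.
Qed.

Lemma letter_lift (p q : T D * bool) :
  exists a b, length a = length b /\
    amal_eq D a (phiw D (p :: nil)) /\ amal_eq D b (phiw D (q :: nil)) /\
    rho (amalg_dist D) a b <= letter_dist (amalg_dist D) (Defs.e D) p q.
Proof.
  assert (unit_l : forall x, amal_eq D (Defs.e D :: x :: nil) (x :: nil))
    by (intro x; apply rst_step; exact (as_unit D nil (x :: nil))).
  assert (unit_r : forall x, amal_eq D (x :: Defs.e D :: nil) (x :: nil))
    by (intro x; apply rst_step; exact (as_unit D (x :: nil) nil)).
  destruct p as [x []], q as [y []]; simpl.
  - exists (inv D x :: nil), (inv D y :: nil).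
    repeat split; try apply rst_refl. simpl. pose proof (amalg_dist_inv x y). lra.
  - exists (inv D x :: Defs.e D :: nil), (Defs.e D :: y :: nil).
    repeat split; auto. simpl. pose proof (amalg_dist_inv_e_l x). lra.
  - exists (x :: Defs.e D :: nil), (Defs.e D :: inv D y :: nil).
    repeat split; auto. simpl. pose proof (amalg_dist_inv_e_r y). lra.
  - exists (x :: nil), (y :: nil). repeat split; try apply rst_refl. simpl. lra.
Qed.

Lemma word_lift (u v : list (T D * bool)) : length u = length v ->
  exists a b, length a = length b /\ amal_eq D a (phiw D u) /\ amal_eq D b (phiw D v) /\
    rho (amalg_dist D) a b <= rho (letter_dist (amalg_dist D) (Defs.e D)) u v.
Proof.
  revert v; induction u as [|p u IH]; intros [|q v] Hlen; simpl in Hlen; try discriminate.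
  - exists nil, nil. simpl. repeat split; try apply rst_refl. lra.
  - injection Hlen as Hlen.
    destruct (IH v Hlen) as (a & b & Hab & Ha & Hb & Hrho).
    destruct (letter_lift p q) as (a1 & b1 & Hab1 & Ha1 & Hb1 & Hrho1).
    exists (a1 ++ a), (b1 ++ b). repeat split.
    + rewrite !length_app. lia.
    + apply (amal_app _ _ _ _ Ha1 Ha).
    + apply (amal_app _ _ _ _ Hb1 Hb).
    + rewrite rho_app by exact Hab1. simpl. lra.
Qed.

Lemma phi_lipschitz (u0 v0 : list (T D * bool)) :
  dunder D (phiw D u0) (phiw D v0) <= dF D u0 v0.
Proof.
  apply Rinf_ge; [apply dF_candidates_nonempty|].
  intros r (u & v & Hlen & Hu & Hv & ->).
  destruct (word_lift u v Hlen) as (a & b & Hab & Ha & Hb & Hrho).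
  eapply Rle_trans; [|exact Hrho].
  apply Rinf_le with 0.
  - intros r (a' & b' & _ & _ & _ & ->). apply rho_nonneg, amalg_dist_nonneg.
  - exists a, b. repeat split; auto; eapply rst_trans; eauto; apply phi_free; auto.
Qed.

Lemma dunder_le_d0 (w1 w2 : list (T D * bool)) :
  dunder D (phiw D w1) (phiw D w2) <= d0 D w1 w2.
Proof.
  apply Rinf_ge.
  - exists (dF D (w1 ++ nil) (w2 ++ nil)), nil, nil. repeat split; apply rst_refl.
  - intros r (h1 & h2 & Hh1 & Hh2 & ->).
    eapply Rle_trans; [|apply phi_lipschitz].
    apply dunder_compat; apply phi_kernel; assumption.
Qed.

Lemma d0_le_dunder (w1 w2 : list (T D * bool)) :
  d0 D w1 w2 <= dunder D (phiw D w1) (phiw D w2).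
Proof.
  apply Rinf_ge; [apply dunder_candidates_nonempty|].
  intros r (a & b & Hlen & Ha & Hb & ->).
  rewrite <- rho_positive_word.
  eapply Rle_trans with (dF D (w1 ++ winv w1 ++ positive_word a) (w2 ++ winv w2 ++ positive_word b)).
  - apply Rinf_le with 0.
    + intros r (h1 & h2 & _ & _ & ->). apply dF_nonneg.
    + exists (winv w1 ++ positive_word a), (winv w2 ++ positive_word b).
      repeat split; try apply correction_in_kernel; assumption.
  - apply dF_le_rho.
    + unfold positive_word. rewrite !length_map. exact Hlen.
    + apply rst_sym, free_cancel_prefix.
    + apply rst_sym, free_cancel_prefix.
Qed.

End Amalgam.

Theorem mainTheorem4 (D : amalgam_data) (HD : amalgam_setting D) :
  (* the induced map F(G)/N → ∐_A G_λ is onto (φ surjective) *)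
  (forall a : list (T D), exists w, amal_eq D (phiw D w) a) /\
  (* and it is an isometry: d_0(w1 N, w2 N) = d_(φ w1, φ w2) *)
  (forall w1 w2 : list (T D * bool), d0 D w1 w2 = dunder D (phiw D w1) (phiw D w2)).
Proof.
  split.
  - intro a. exists (positive_word D a). rewrite phiw_positive_word. apply rst_refl.
  - intros w1 w2. apply Rle_antisym.
    + apply d0_le_dunder; assumption.
    + apply dunder_le_d0; assumption.
Qed.
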